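(* Let $A$ be a unital separable $C^*$-algebra and let $\alpha\in{\rm Aut}(A)$ be approximately inner. Suppose $\{p_j\}_{j\ge1}$ is a central sequence of projections in $A$. Then there exists a central sequence of partial isometries $\{w_j\}_{j\ge1}$ in $A$ such that $w_j^*w_j=p_j$ and $w_jw_j^*=\alpha(p_j)$ for all $j$.
   Context: An automorphism $\alpha$ of a unital $C^*$-algebra $A$ is approximately inner if there is a sequence of unitaries $u_n\in A$ with $\|u_n^*au_n-\alpha(a)\|\to0$ for all $a\in A$. A sequence $\{x_j\}$ in $A$ is central if $\|x_ja-ax_j\|\to0$ as $j\to\infty$ for every $a\in A$. *)

From HB Require Import structures.
From mathcomp Require Import all_boot all_order all_algebra.
From mathcomp Require Import reals.
From mathcomp Require Import complex.
Set Implicit Arguments. Unset Strict Implicit. Unset Printing Implicit Defensive.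
Import Order.TTheory GRing.Theory Num.Theory.
Local Open Scope ring_scope.

Record cstar_alg (R : realType) := CStarAlg {
  ca_T :> Type;
  ca_zero : ca_T;
  ca_one : ca_T;
  ca_add : ca_T -> ca_T -> ca_T;
  ca_opp : ca_T -> ca_T;
  ca_scale : R[i] -> ca_T -> ca_T;
  ca_mul : ca_T -> ca_T -> ca_T;
  ca_star : ca_T -> ca_T;
  ca_norm : ca_T -> R;
  ca_addA : forall x y z, ca_add x (ca_add y z) = ca_add (ca_add x y) z;
  ca_addC : forall x y, ca_add x y = ca_add y x;
  ca_add0 : forall x, ca_add ca_zero x = x;
  ca_addN : forall x, ca_add (ca_opp x) x = ca_zero;
  ca_scale1 : forall x, ca_scale 1 x = x;
  ca_scaleA : forall a b x, ca_scale a (ca_scale b x) = ca_scale (a * b) x;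
  ca_scaleDr : forall a x y, ca_scale a (ca_add x y) = ca_add (ca_scale a x) (ca_scale a y);
  ca_scaleDl : forall a b x, ca_scale (a + b) x = ca_add (ca_scale a x) (ca_scale b x);
  ca_mulA : forall x y z, ca_mul x (ca_mul y z) = ca_mul (ca_mul x y) z;
  ca_mul1l : forall x, ca_mul ca_one x = x;
  ca_mul1r : forall x, ca_mul x ca_one = x;
  ca_mulDl : forall x y z, ca_mul (ca_add x y) z = ca_add (ca_mul x z) (ca_mul y z);
  ca_mulDr : forall x y z, ca_mul x (ca_add y z) = ca_add (ca_mul x y) (ca_mul x z);
  ca_scale_mull : forall a x y, ca_mul (ca_scale a x) y = ca_scale a (ca_mul x y);
  ca_scale_mulr : forall a x y, ca_mul x (ca_scale a y) = ca_scale a (ca_mul x y);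
  ca_starK : forall x, ca_star (ca_star x) = x;
  ca_starD : forall x y, ca_star (ca_add x y) = ca_add (ca_star x) (ca_star y);
  ca_starZ : forall a x, ca_star (ca_scale a x) = ca_scale (conjc a) (ca_star x);
  ca_starM : forall x y, ca_star (ca_mul x y) = ca_mul (ca_star y) (ca_star x);
  ca_norm_ge0 : forall x, 0 <= ca_norm x;
  ca_norm_eq0 : forall x, ca_norm x = 0 -> x = ca_zero;
  ca_normD : forall x y, ca_norm (ca_add x y) <= ca_norm x + ca_norm y;
  ca_normZ : forall a x, ca_norm (ca_scale a x) = Normc.normc a * ca_norm x;
  ca_normM : forall x y, ca_norm (ca_mul x y) <= ca_norm x * ca_norm y;
  ca_cstar : forall x, ca_norm (ca_mul (ca_star x) x) = ca_norm x ^+ 2;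
  ca_complete : forall u : nat -> ca_T,
    (forall e : R, 0 < e -> exists N, forall m n, (N <= m)%N -> (N <= n)%N ->
        ca_norm (ca_add (u m) (ca_opp (u n))) < e) ->
    exists l, forall e : R, 0 < e -> exists N, forall n, (N <= n)%N ->
        ca_norm (ca_add (u n) (ca_opp l)) < e
}.

Arguments ca_zero {R} _.
Arguments ca_one {R} _.

Section Defs.
Context {R : realType} (A : cstar_alg R).

Local Notation "x + y" := (ca_add x y).
Local Notation "- x" := (ca_opp x).
Local Notation "x * y" := (ca_mul x y).
Local Notation "x ^*" := (ca_star x).

Definition ca_dist (x y : A) : R := ca_norm (x + - y).

Definition separable : Prop :=
  exists d : nat -> A, forall (x : A) (e : R), 0 < e -> exists n, ca_dist x (d n) < e.

Definition is_projection (p : A) : Prop := p^* = p /\ p * p = p.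

Definition is_partial_isometry (w : A) : Prop := is_projection (w^* * w).

Definition is_unitary (u : A) : Prop := u^* * u = ca_one A /\ u * u^* = ca_one A.

Definition is_automorphism (f : A -> A) : Prop :=
  (forall x y, f (x + y) = f x + f y) /\
  (forall a x, f (ca_scale a x) = ca_scale a (f x)) /\
  (forall x y, f (x * y) = f x * f y) /\
  f (ca_one A) = ca_one A /\
  (forall x, f (x^*) = (f x)^*) /\
  bijective f.

Definition approximately_inner (f : A -> A) : Prop :=
  exists u : nat -> A, (forall n, is_unitary (u n)) /\
    forall (a : A) (e : R), 0 < e -> exists N, forall n, (N <= n)%N ->
      ca_dist ((u n)^* * a * u n) (f a) < e.

Definition central_seq (x : nat -> A) : Prop :=
  forall (a : A) (e : R), 0 < e -> exists N, forall j, (N <= j)%N ->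
    ca_dist (x j * a) (a * x j) < e.

End Defs.

(* Approximate innerness gives unitaries u_m with u_m^* p_j u_m close to alpha(p_j) for m
   large.  Choosing n(j) -> oo slowly enough that u_(n(j)) almost commutes with p_j, the
   unitaries x_j = u_(n(j))^* u_(m(j)) are asymptotically central (both u^* b u tend to
   alpha(b)) and still satisfy x_j^* p_j x_j - alpha(p_j) -> 0.  Then
   z_j = alpha(p_j) x_j^* p_j is almost a partial isometry from p_j to alpha(p_j), and the
   polar correction w_j = z_j (z_j^* z_j + 1 - p_j)^(-1/2), with the inverse square root
   given by the binomial series of (1 - t)^(-1/2), is an exact partial isometry close to
   z_j, hence still asymptotically central. *)
From HB Require Import structures.
From mathcomp Require Import all_boot all_order all_algebra reals complex.
From mathcomp Require Import boolp ring lra.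
Set Implicit Arguments. Unset Strict Implicit. Unset Printing Implicit Defensive.
Import Order.TTheory GRing.Theory Num.Theory.
Local Open Scope ring_scope.

Definition calg {R : realType} (A : cstar_alg R) : Type := ca_T A.
HB.instance Definition _ (R : realType) (A : cstar_alg R) := gen_eqMixin (calg A).
HB.instance Definition _ (R : realType) (A : cstar_alg R) := gen_choiceMixin (calg A).
HB.instance Definition _ (R : realType) (A : cstar_alg R) :=
  GRing.isZmodule.Build (calg A) (@ca_addA R A) (@ca_addC R A) (@ca_add0 R A) (@ca_addN R A).
HB.instance Definition _ (R : realType) (A : cstar_alg R) :=
  GRing.Zmodule_isPzRing.Build (calg A)
    (@ca_mulA R A) (@ca_mul1l R A) (@ca_mul1r R A) (@ca_mulDl R A) (@ca_mulDr R A).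

Definition ca_rscale {R : realType} (A : cstar_alg R) (c : R) (x : calg A) : calg A :=
  ca_scale (c%:C)%C x.

Section RealScaling.
Variables (R : realType) (A : cstar_alg R).

Lemma ca_rscaleA a b (v : calg A) : ca_rscale a (ca_rscale b v) = ca_rscale (a * b) v.
Proof. by rewrite /ca_rscale ca_scaleA rmorphM. Qed.
Lemma ca_rscale1 : left_id 1 (@ca_rscale R A).
Proof. by move=> v; rewrite /ca_rscale ca_scale1. Qed.
Lemma ca_rscaleDr : right_distributive (@ca_rscale R A) +%R.
Proof. by move=> a u v; rewrite /ca_rscale ca_scaleDr. Qed.
Lemma ca_rscaleDl (v : calg A) : {morph (@ca_rscale R A)^~ v : a b / a + b}.
Proof. by move=> a b; rewrite /ca_rscale rmorphD ca_scaleDl. Qed.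

End RealScaling.

HB.instance Definition _ (R : realType) (A : cstar_alg R) :=
  GRing.Zmodule_isLmodule.Build R (calg A)
    (@ca_rscaleA R A) (@ca_rscale1 R A) (@ca_rscaleDr R A) (@ca_rscaleDl R A).

Definition star {R : realType} {A : cstar_alg R} (x : calg A) : calg A := ca_star x.

Section StarNorm.
Variables (R : realType) (A : cstar_alg R).
Local Notation T := (calg A).
Local Notation nm := (@ca_norm R A).
Implicit Types x y z : T.

Lemma scalerAl_ca (c : R) x y : (c *: x) * y = c *: (x * y).
Proof. exact: ca_scale_mull. Qed.
Lemma scalerAr_ca (c : R) x y : x * (c *: y) = c *: (x * y).
Proof. exact: ca_scale_mulr. Qed.

Lemma starK x : star (star x) = x. Proof. exact: ca_starK. Qed.
Lemma starD x y : star (x + y) = star x + star y. Proof. exact: ca_starD. Qed.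
Lemma starM x y : star (x * y) = star y * star x. Proof. exact: ca_starM. Qed.
Lemma star0 : star (0 : T) = 0.
Proof. by apply: (@addrI _ (star (0 : T))); rewrite -starD !addr0. Qed.
Lemma starN x : star (- x) = - star x.
Proof. by apply: (@addrI _ (star x)); rewrite -starD !subrr star0. Qed.
Lemma starB x y : star (x - y) = star x - star y.
Proof. by rewrite starD starN. Qed.
Lemma star1 : star (1 : T) = 1.
Proof.
have := starM (star 1) 1; rewrite starK mulr1 => <-.
by rewrite -[RHS](starK 1); congr star; rewrite -[LHS]mulr1.
Qed.
Lemma starZ (c : R) x : star (c *: x) = c *: star x.
Proof. by rewrite /star /GRing.scale /= /ca_rscale ca_starZ conjc_real. Qed.
Lemma starX x n : star (x ^+ n) = star x ^+ n.
Proof.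
elim: n => [|n IH]; first by rewrite !expr0 star1.
by rewrite exprS starM IH exprSr.
Qed.
Lemma star_sum (I : Type) (r : seq I) (P : pred I) (F : I -> T) :
  star (\sum_(i <- r | P i) F i) = \sum_(i <- r | P i) star (F i).
Proof.
elim: r => [|a r IH]; first by rewrite !big_nil star0.
by rewrite !big_cons; case: (P a); rewrite ?starD IH.
Qed.

Lemma nm_ge0 x : 0 <= nm x. Proof. exact: ca_norm_ge0. Qed.
Lemma nmD x y : nm (x + y) <= nm x + nm y. Proof. exact: ca_normD. Qed.
Lemma nmM x y : nm (x * y) <= nm x * nm y. Proof. exact: ca_normM. Qed.
Lemma nmZ (c : R) x : nm (c *: x) = `|c| * nm x.
Proof.
rewrite /GRing.scale /= /ca_rscale ca_normZ; congr (_ * _).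
by rewrite /Normc.normc /= expr0n /= addr0 sqrtr_sqr.
Qed.
Lemma nm0 : nm (0 : T) = 0.
Proof. by rewrite -(scale0r (0 : T)) nmZ normr0 mul0r. Qed.
Lemma nmN x : nm (- x) = nm x.
Proof. by rewrite -scaleN1r nmZ normrN normr1 mul1r. Qed.
Lemma nm_distC x y : nm (x - y) = nm (y - x).
Proof. by rewrite -nmN opprB. Qed.
Lemma nm_distD x y z : nm (x - z) <= nm (x - y) + nm (y - z).
Proof. by rewrite -[x - z](subrKA y); apply: nmD. Qed.
Lemma nm_sum (n : nat) (F : 'I_n -> T) : nm (\sum_(i < n) F i) <= \sum_(i < n) nm (F i).
Proof.
elim/big_rec2: _ => [|i y1 y2 _ H]; first by rewrite nm0.
by apply: le_trans (nmD _ _) _; apply: lerD.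
Qed.
Lemma nm_le_mul x y (a b : R) : nm x <= a -> nm y <= b -> nm (x * y) <= a * b.
Proof. by move=> hx hy; apply: le_trans (nmM _ _) _; apply: ler_pM; rewrite ?nm_ge0. Qed.
Lemma nm_contrMl x y : nm x <= 1 -> nm (x * y) <= nm y.
Proof. by move=> hx; rewrite -[nm y]mul1r; apply: nm_le_mul. Qed.
Lemma nm_contrMr x y : nm y <= 1 -> nm (x * y) <= nm x.
Proof. by move=> hy; rewrite -[nm x]mulr1; apply: nm_le_mul. Qed.

Lemma nm_cstar x : nm (star x * x) = nm x ^+ 2. Proof. exact: ca_cstar. Qed.

Lemma nm_star x : nm (star x) = nm x.
Proof.
suff le_star y : nm y <= nm (star y).
  by apply/eqP; rewrite eq_le le_star -{2}(starK x) le_star.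
have [->|y0] := eqVneq (nm y) 0; first exact: nm_ge0.
have ygt0 : 0 < nm y by rewrite lt0r y0 nm_ge0.
by rewrite -(ler_pM2r ygt0) -expr2 -[_ ^+ 2]nm_cstar nmM.
Qed.

Lemma nm_sa_idem x : star x = x -> x * x = x -> nm x = 0 \/ nm x = 1.
Proof.
move=> sx xx; have E : nm x = nm x * nm x by rewrite -expr2 -nm_cstar sx xx.
have [->|x0] := eqVneq (nm x) 0; [by left | right].
by apply: (mulfI x0); rewrite mulr1 -E.
Qed.

Lemma nm1_le1 : nm (1 : T) <= 1.
Proof. by case: (nm_sa_idem star1 (mulr1 1)) => ->. Qed.

Lemma eq0_of_nm_le (K : R) x : 0 <= K -> (forall e : R, 0 < e -> nm x <= K * e) -> x = 0.
Proof.
move=> K0 H; apply: ca_norm_eq0; apply/eqP; rewrite eq_le nm_ge0 andbT.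
apply/ler_addgt0Pr => e e0; rewrite add0r.
have K1 : 0 < K + 1 by lra.
apply: le_trans (H _ (divr_gt0 e0 K1)) _.
by rewrite mulrA ler_pdivrMr //; nra.
Qed.

Definition unitary (u : T) := star u * u = 1 /\ u * star u = 1.
Definition proj (e : T) := star e = e /\ e * e = e.

Lemma nm_unitary u : unitary u -> nm u <= 1.
Proof.
case=> uu _; have := nm_cstar u; rewrite uu => E.
rewrite -(expr_le1 (isT : (0 < 2)%N)) ?nm_ge0 // -E; exact: nm1_le1.
Qed.
Lemma nm_star_unitary u : unitary u -> nm (star u) <= 1.
Proof. by rewrite nm_star; apply: nm_unitary. Qed.
Lemma nm_proj e : proj e -> nm e <= 1.
Proof. by case=> se ee; case: (nm_sa_idem se ee) => ->. Qed.
Lemma proj_small e : proj e -> nm e < 1 -> e = 0.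
Proof.
case=> se ee lt1; apply: ca_norm_eq0.
by case: (nm_sa_idem se ee) lt1 => // ->; rewrite ltxx.
Qed.

End StarNorm.

Section BinomialSeries.
Variable R : realType.

(* binomial(2k, k) / 4^k, the Taylor coefficients of (1 - x)^(-1/2) *)
Fixpoint isqrt_coef (k : nat) : R :=
  if k is k'.+1 then isqrt_coef k' * (2 * k'%:R + 1) / (2 * k'%:R + 2) else 1.

Lemma isqrt_coef_ge0 k : 0 <= isqrt_coef k.
Proof. by elim: k => [|k IH] //=; rewrite divr_ge0 ?mulr_ge0 ?addr_ge0 ?mulr_ge0. Qed.

Lemma isqrt_coef_le1 k : isqrt_coef k <= 1.
Proof.
elim: k => [|k IH] //=; have k0 : 0 <= k%:R :> R by [].
rewrite ler_pdivrMr; last by lra.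
by have := isqrt_coef_ge0 k; nra.
Qed.

Lemma isqrt_coefS k : 2 * k.+1%:R * isqrt_coef k.+1 = (2 * k%:R + 1) * isqrt_coef k.
Proof.
rewrite /= -natr1; have k0 : 0 <= k%:R :> R by [].
have k2 : 2 * k%:R + 2 != 0 :> R by rewrite lt0r_neq0 //; lra.
by field.
Qed.

Definition isqrt_conv k := \sum_(0 <= j < k.+1) isqrt_coef j * isqrt_coef (k - j).
Definition isqrt_wconv k := \sum_(0 <= j < k.+1) j%:R * isqrt_coef j * isqrt_coef (k - j).

Lemma isqrt_wconv_sym k : isqrt_wconv k *+ 2 = k%:R * isqrt_conv k.
Proof.
rewrite /isqrt_wconv /isqrt_conv mulr2n [X in _ + X = _]big_nat_rev /=.
rewrite -big_split /= mulr_sumr; apply: eq_big_nat => j /andP[_ hj].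
rewrite add0n subSS subKn; last by rewrite -ltnS.
by rewrite (natrB _ (hj : (j <= k)%N)); ring.
Qed.

Lemma isqrt_wconvS k : isqrt_wconv k.+1 *+ 2 = isqrt_wconv k *+ 2 + isqrt_conv k.
Proof.
rewrite /isqrt_wconv big_nat_recl // !mul0r add0r -!sumrMnl /isqrt_conv -big_split /=.
apply: eq_big_nat => j _; rewrite subSS.
have -> : (j.+1%:R * isqrt_coef j.+1 * isqrt_coef (k - j)) *+ 2
        = (2 * j.+1%:R * isqrt_coef j.+1) * isqrt_coef (k - j).
  by rewrite -mulr_natl; ring.
by rewrite isqrt_coefS -mulr_natl; ring.
Qed.

(* The squared series is 1/(1 - x): symmetry of the weights and the recursion of the
   coefficients show that conv is constant. *)
Lemma isqrt_conv1 k : isqrt_conv k = 1.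
Proof.
elim: k => [|k IH]; first by rewrite /isqrt_conv big_nat1 /= mulr1.
have k1 : k.+1%:R != 0 :> R by rewrite pnatr_eq0.
apply: (mulfI k1); have := isqrt_wconv_sym k.+1.
by rewrite isqrt_wconvS isqrt_wconv_sym IH => <-; rewrite -natr1; ring.
Qed.

End BinomialSeries.

Section NullSeq.
Variable R : realType.
Implicit Types f g : nat -> R.

Definition null_seq f := forall e : R, 0 < e -> exists N, forall j, (N <= j)%N -> f j < e.

Lemma null_seqD f g : null_seq f -> null_seq g -> null_seq (fun j => f j + g j).
Proof.
move=> hf hg e e0; have e2 : 0 < e / 2 by rewrite divr_gt0.
have [N1 H1] := hf _ e2; have [N2 H2] := hg _ e2.
exists (maxn N1 N2) => j; rewrite geq_max => /andP[/H1 ? /H2 ?]; lra.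
Qed.

Lemma null_seqZ (K : R) f : 0 <= K -> null_seq f -> null_seq (fun j => K * f j).
Proof.
move=> K0 hf e e0; have K1 : 0 < K + 1 by lra.
have [N H] := hf _ (divr_gt0 e0 K1); exists N => j /H fj.
have : K * f j <= K * (e / (K + 1)) by rewrite ler_wpM2l // ltW.
have : e / (K + 1) * (K + 1) = e by rewrite divfK ?gt_eqF.
have : 0 < e / (K + 1) by rewrite divr_gt0.
nra.
Qed.

Lemma null_seq_le f g : (exists N, forall j, (N <= j)%N -> f j <= g j) ->
  null_seq g -> null_seq f.
Proof.
move=> [N0 H0] hg e e0; have [N H] := hg _ e0; exists (maxn N0 N) => j.
by rewrite geq_max => /andP[/H0 fg /H ge]; apply: le_lt_trans fg ge.
Qed.

Lemma null_seq_comp f (n : nat -> nat) : null_seq f ->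
  (forall K, exists J, forall j, (J <= j)%N -> (K <= n j)%N) -> null_seq (f \o n).
Proof.
move=> hf hn e /hf[K HK]; have [J HJ] := hn K.
by exists J => j /HJ /HK.
Qed.

End NullSeq.

(* The offset 20 keeps tol k <= 1/20, so a sum of two tolerances stays under the 1/10
   threshold of [polar]. *)
Definition tol {R : realType} (k : nat) : R := (k%:R + 20)^-1.

Lemma tol_gt0 (R : realType) k : 0 < tol k :> R.
Proof. by rewrite invr_gt0 ltr_wpDl. Qed.

Lemma tol_le (R : realType) k : tol k <= 1 / 20 :> R.
Proof. by rewrite div1r lef_pV2 ?posrE ?ltr_wpDl // lerDr. Qed.

Lemma null_seq_tol (R : realType) : null_seq (@tol R).
Proof.
move=> e e0; exists (Num.bound e^-1) => k hk.
have b : e^-1 < (Num.bound e^-1)%:R by apply: archi_boundP; rewrite invr_ge0 ltW.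
have k0 : (0 : R) <= k%:R by [].
have : ((Num.bound e^-1)%:R : R) <= k%:R by rewrite ler_nat.
move=> bk; rewrite -[e]invrK /tol ltf_pV2 ?posrE ?invr_gt0 //; lra.
Qed.

Section Geometric.
Variables (R : realType) (d : R).
Hypotheses (d0 : 0 <= d) (d_le_half : 2 * d <= 1).

Lemma geometric_tail m n :
  \sum_(i < n) (if (m <= i)%N then d ^+ i else 0) <= 2 * d ^+ m.
Proof.
suff H : \sum_(i < n) (if (m <= i)%N then d ^+ i else 0) + 2 * d ^+ maxn m n <= 2 * d ^+ m.
  by apply: le_trans H; rewrite lerDl mulr_ge0 ?exprn_ge0.
elim: n => [|n IH]; first by rewrite big_ord0 add0r maxn0.
rewrite big_ord_recr /=; case: (leqP m n) => hmn; last first.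
  by rewrite (maxn_idPl hmn) (maxn_idPl (ltnW hmn)) addr0 in IH *.
rewrite (maxn_idPr (leqW hmn)) (maxn_idPr hmn) in IH *.
apply: le_trans IH; rewrite -addrA lerD2l exprSr.
by have := exprn_ge0 n d0; have := d_le_half; nra.
Qed.

Lemma null_seq_geometric (K : R) : 0 < K -> null_seq (fun n => K * d ^+ n).
Proof.
move=> K0 e e0; set e' := e / K; have e'0 : 0 < e' by rewrite divr_gt0.
have [N HN] : exists N : nat, e'^-1 < N%:R.
  by exists (Num.bound e'^-1); apply: archi_boundP; rewrite invr_ge0 ltW.
exists N => n hn; rewrite mulrC -ltr_pdivlMr // -/e'.
have pow2 k : k%:R <= (2 : R) ^+ k.
  elim: k => [|k IH]; first by rewrite expr0 ler01.
  rewrite exprS -natr1; have : 1 <= (2 : R) ^+ k by apply: exprn_ege1; lra.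
  lra.
have dn : d ^+ n <= ((2 : R) ^+ n)^-1.
  rewrite -exprVn; apply: lerXn2r; rewrite ?nnegrE ?invr_ge0 //.
  by rewrite -div1r ler_pdivlMr // mulrC.
apply: le_lt_trans dn _; rewrite -[e']invrK ltf_pV2 ?posrE ?invr_gt0 ?exprn_gt0 //.
apply: lt_le_trans HN _; apply: le_trans (pow2 n); by rewrite ler_nat.
Qed.

End Geometric.

Section PolyEval.
Variables (R : realType) (A : cstar_alg R) (t : calg A).
Local Notation T := (calg A).
Local Notation nm := (@ca_norm R A).

(* [horner_alg] would need A to be a nonzero ring, which the axioms do not exclude. *)
Definition peval (P : {poly R}) : T := \sum_(i < size P) P`_i *: t ^+ i.

Lemma peval_wide (P : {poly R}) n :
  (size P <= n)%N -> peval P = \sum_(i < n) P`_i *: t ^+ i.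
Proof.
move=> le_Pn; rewrite /peval (big_ord_widen n (fun i => P`_i *: t ^+ i) le_Pn) big_mkcond.
apply: eq_bigr => i _; case: ifP => // /negbT; rewrite -leqNgt => h.
by rewrite nth_default // scale0r.
Qed.

Lemma peval0 : peval 0 = 0.
Proof. by rewrite /peval size_poly0 big_ord0. Qed.

Lemma pevalD P Q : peval (P + Q) = peval P + peval Q.
Proof.
have le_PQ : (size (P + Q)%R <= size P + size Q)%N.
  by apply: leq_trans (size_polyD _ _) _; rewrite geq_max leq_addr leq_addl.
rewrite (peval_wide le_PQ) (peval_wide (leq_addr (size Q) _)).
rewrite (peval_wide (leq_addl (size P) _)) -big_split /=.
by apply: eq_bigr => i _; rewrite coefD scalerDl.
Qed.

Lemma pevalCM c Q : peval (c%:P * Q) = c *: peval Q.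
Proof.
have le_cQ : (size (c%:P * Q)%R <= size Q)%N by rewrite mul_polyC size_scale_leq.
rewrite (peval_wide le_cQ) /peval scaler_sumr.
by apply: eq_bigr => i _; rewrite coefCM scalerA.
Qed.

Lemma pevalB P Q : peval (P - Q) = peval P - peval Q.
Proof. by rewrite pevalD -mulN1r -polyCN pevalCM scaleN1r. Qed.

Lemma pevalC c : peval c%:P = c *: (1 : T).
Proof. by rewrite (@peval_wide _ 1) ?size_polyC ?leq_b1 // big_ord1 coefC. Qed.

Lemma peval1 : peval 1 = 1.
Proof. by rewrite -polyC1 pevalC scale1r. Qed.

Lemma pevalMX Q : peval (Q * 'X) = peval Q * t.
Proof.
have le_QX : (size (Q * 'X)%R <= (size Q).+1)%N.
  by apply: leq_trans (size_polyMleq _ _) _; rewrite size_polyX addn2.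
rewrite (peval_wide le_QX) big_ord_recl coefMX /= scale0r add0r /peval mulr_suml.
by apply: eq_bigr => i _; rewrite coefMX /= scalerAl_ca exprSr.
Qed.

Lemma pevalX : peval 'X = t.
Proof. by rewrite -['X]mul1r pevalMX peval1 mul1r. Qed.

Lemma peval_comm P (y : T) : t * y = y * t -> peval P * y = y * peval P.
Proof.
move=> ty; rewrite /peval mulr_suml mulr_sumr; apply: eq_bigr => i _.
rewrite scalerAl_ca scalerAr_ca; congr (_ *: _).
elim: (nat_of_ord i) => [|k IH]; first by rewrite expr0 mul1r mulr1.
by rewrite exprS -mulrA IH mulrA ty -mulrA.
Qed.

Lemma pevalM P Q : peval (P * Q) = peval P * peval Q.
Proof.
elim/poly_ind: P Q => [|P c IH] Q; first by rewrite mul0r peval0 mul0r.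
rewrite mulrDl mulrAC pevalD pevalMX IH pevalCM pevalD pevalMX pevalC.
by rewrite mulrDl scalerAl_ca mul1r -!mulrA (peval_comm Q (commr_refl t)).
Qed.

Lemma peval_star P : star t = t -> star (peval P) = peval P.
Proof. by move=> st; rewrite /peval star_sum; apply: eq_bigr => i _; rewrite starZ starX st. Qed.

Variable d : R.
Hypotheses (d0 : 0 <= d) (d_le_half : 2 * d <= 1) (nm_t : nm t <= d).

Lemma nm_peval_tail (P : {poly R}) m (K : R) : (forall i, (i < m)%N -> P`_i = 0) ->
  (forall i, `|P`_i| <= K) -> nm (peval P) <= 2 * K * d ^+ m.
Proof.
move=> Pm PK; have K0 : 0 <= K by apply: le_trans (PK 0%N).
have nm_pow i : nm (t ^+ i) <= d ^+ i.
  elim: i => [|i IH]; first by rewrite !expr0 nm1_le1.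
  by rewrite !exprS nm_le_mul.
apply: le_trans (nm_sum _) _.
apply: (@le_trans _ _ (K * \sum_(i < size P) (if (m <= i)%N then d ^+ i else 0))).
  rewrite mulr_sumr; apply: ler_sum => i _; rewrite nmZ.
  case: leqP => h; last by rewrite Pm // normr0 mul0r mulr0.
  by apply: ler_pM; rewrite ?nm_ge0.
by rewrite -mulrA mulrCA ler_wpM2l // geometric_tail.
Qed.

End PolyEval.

Section InverseSqrt.
Variables (R : realType) (A : cstar_alg R) (t : calg A) (d : R).
Hypotheses (d0 : 0 <= d) (d_le_half : 2 * d <= 1).
Hypothesis nm_t : ca_norm t <= d.
Local Notation T := (calg A).
Local Notation nm := (@ca_norm R A).

Definition isqrt_poly n : {poly R} := \poly_(i < n) isqrt_coef R i.
Definition isqrt_approx n : T := peval t (isqrt_poly n).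

Lemma coef_isqrt_poly n i : (isqrt_poly n)`_i = if (i < n)%N then isqrt_coef R i else 0.
Proof. exact: coef_poly. Qed.

Lemma abs_coef_isqrt_poly n i : `|(isqrt_poly n)`_i| <= 1.
Proof.
rewrite coef_isqrt_poly; case: ifP => _; last by rewrite normr0.
by rewrite ger0_norm ?isqrt_coef_le1 ?isqrt_coef_ge0.
Qed.

Lemma isqrt_approx_cauchy m n : (m <= n)%N ->
  nm (isqrt_approx n - isqrt_approx m) <= 2 * d ^+ m.
Proof.
move=> le_mn; rewrite /isqrt_approx -pevalB -[2 * _]mulr1 mulrAC.
apply: (nm_peval_tail d0 d_le_half nm_t) => [i lt_im|i].
  by rewrite coefB !coef_isqrt_poly lt_im (leq_trans lt_im le_mn) subrr.
rewrite coefB !coef_isqrt_poly; case: (ltnP i m) => him.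
  by rewrite (leq_trans him le_mn) subrr normr0.
by rewrite subr0 -coef_isqrt_poly abs_coef_isqrt_poly.
Qed.

Lemma isqrt_approx_dist1 n : (0 < n)%N -> nm (isqrt_approx n - 1) <= 2 * d.
Proof.
move=> n0; rewrite /isqrt_approx -(peval1 t) -pevalB -[2 * d]mulr1 -[d in X in _ <= X]expr1.
rewrite mulrAC; apply: (nm_peval_tail d0 d_le_half nm_t) => [[|i] // _|[|i]].
- by rewrite coefB coef_isqrt_poly n0 coef1 subrr.
- by rewrite coefB coef_isqrt_poly n0 coef1 subrr normr0.
- by rewrite coefB coef1 subr0 abs_coef_isqrt_poly.
Qed.

Lemma nm_isqrt_approx n : (0 < n)%N -> nm (isqrt_approx n) <= 2.
Proof.
move=> n0; have := nmD (isqrt_approx n - 1) 1; rewrite subrK.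
by have := isqrt_approx_dist1 n0; have := nm1_le1 A; have := d_le_half; lra.
Qed.

(* (1 - x)^(-1/2) squared is 1/(1 - x) = sum_i x^i. *)
Lemma coef_isqrt_poly_sqr n i : (i < n)%N -> (isqrt_poly n ^+ 2)`_i = 1.
Proof.
move=> lt_in; rewrite expr2 coefM -(isqrt_conv1 R i) /isqrt_conv big_mkord.
apply: eq_bigr => j _.
rewrite !coef_isqrt_poly (leq_ltn_trans _ lt_in) ?(leq_ltn_trans _ lt_in) // ?leq_subr //.
by rewrite -ltnS.
Qed.

Lemma abs_coef_isqrt_poly_sqr n i : `|(isqrt_poly n ^+ 2)`_i| <= 1.
Proof.
rewrite expr2 coefM -(isqrt_conv1 R i) /isqrt_conv big_mkord.
have bound (j : 'I_i.+1) : 0 <= (isqrt_poly n)`_j * (isqrt_poly n)`_(i - j)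
                             <= isqrt_coef R j * isqrt_coef R (i - j).
  rewrite !coef_isqrt_poly; do 2 case: ifP => _;
  by rewrite ?mul0r ?mulr0 ?lexx ?mulr_ge0 ?isqrt_coef_ge0.
rewrite ger0_norm; last by apply: sumr_ge0 => j _; case/andP: (bound j).
by apply: ler_sum => j _; case/andP: (bound j).
Qed.

Lemma isqrt_approx_inv n : (0 < n)%N ->
  nm (isqrt_approx n * isqrt_approx n * (1 - t) - 1) <= 6 * d ^+ n.
Proof.
move=> n0; set P := isqrt_poly n ^+ 2 * (1 - 'X) - 1.
have -> : isqrt_approx n * isqrt_approx n * (1 - t) - 1 = peval t P.
  by rewrite /P expr2 !(pevalB, pevalM) peval1 pevalX.
have -> : 6 * d ^+ n = 2 * 3 * d ^+ n by ring.
apply: (nm_peval_tail d0 d_le_half nm_t) => i.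
  rewrite /P mulrBr mulr1 !coefB coefMX coef1 => lt_in.
  case: i lt_in => [|i] lt_in /=; first by rewrite coef_isqrt_poly_sqr // subr0 subrr.
  by rewrite !coef_isqrt_poly_sqr ?subrr ?subr0 // (ltn_trans _ lt_in).
rewrite /P mulrBr mulr1 !coefB coefMX coef1.
have c1 : `|(if i == 0%N then 0 else (isqrt_poly n ^+ 2)`_i.-1)| <= 1.
  by case: (i == 0%N); rewrite ?normr0 ?abs_coef_isqrt_poly_sqr.
have c2 : `|((i == 0%N)%:R : R)| <= 1 by case: (i == 0%N); rewrite ?normr0 ?normr1.
have := abs_coef_isqrt_poly_sqr n i; have := ler_normB (isqrt_poly n ^+ 2)`_i
  (if i == 0%N then 0 else (isqrt_poly n ^+ 2)`_i.-1).
have := ler_normB ((isqrt_poly n ^+ 2)`_i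
  - (if i == 0%N then 0 else (isqrt_poly n ^+ 2)`_i.-1)) ((i == 0%N)%:R).
lra.
Qed.

Lemma isqrt_approx_cvg : exists s, null_seq (fun n => nm (isqrt_approx n - s)).
Proof.
case: (@ca_complete R A isqrt_approx) => [e e0|s Hs]; last by exists s.
have [N HN] := null_seq_geometric d0 d_le_half (ltr0Sn R 1) e0.
exists N => m n hm hn; rewrite -/(nm _) -[ca_add _ _]/(isqrt_approx m - isqrt_approx n).
case: (leqP m n) => h; first rewrite nm_distC.
  by apply: le_lt_trans (isqrt_approx_cauchy h) _; apply: HN.
by apply: le_lt_trans (isqrt_approx_cauchy (ltnW h)) _; apply: HN.
Qed.

Variable s : T.
Hypothesis s_lim : null_seq (fun n => nm (isqrt_approx n - s)).

Lemma isqrt_dist1 : nm (s - 1) <= 2 * d.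
Proof.
apply/ler_addgt0Pr => e /s_lim[N HN].
have h1 := HN (maxn N 1) (leq_maxl _ _).
have h2 := isqrt_approx_dist1 (leq_maxr N 1).
by have := nm_distD s (isqrt_approx (maxn N 1)) 1; rewrite (nm_distC s (isqrt_approx _)); lra.
Qed.

Lemma nm_isqrt : nm s <= 2.
Proof.
have := nmD (s - 1) 1; rewrite subrK.
by have := isqrt_dist1; have := nm1_le1 A; have := d_le_half; lra.
Qed.

Lemma isqrt_sqr_inv : s * s * (1 - t) = 1.
Proof.
apply/eqP; rewrite -subr_eq0; apply/eqP; apply: (@eq0_of_nm_le _ _ 9) => // e e0.
have [N1 HN1] := s_lim e0.
have [N2 HN2] := null_seq_geometric d0 d_le_half (ltr0Sn R 5) e0.
set n := maxn (maxn N1 N2) 1.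
have [n1 n2 n0] : [/\ (N1 <= n)%N, (N2 <= n)%N & (0 < n)%N].
  by rewrite /n !leq_max !leqnn /= ?orbT.
set S := isqrt_approx n.
have -> : s * s * (1 - t) - 1 = (s * (s - S) + (s - S) * S) * (1 - t) + (S * S * (1 - t) - 1).
  have -> : s * (s - S) + (s - S) * S = s * s - S * S.
    by rewrite mulrBr mulrBl addrA subrK.
  by rewrite mulrBl addrA subrK.
have a1 : nm (s - S) <= e by rewrite nm_distC ltW // HN1.
have a2 : nm (1 - t) <= 2.
  apply: le_trans (nmD _ _) _; rewrite nmN.
  by have := nm1_le1 A; have := nm_t; have := d_le_half; lra.
have b1 : nm (s * (s - S) + (s - S) * S) <= 2 * e + e * 2.
  by apply: le_trans (nmD _ _) _; apply: lerD; apply: nm_le_mul; rewrite ?nm_isqrt ?nm_isqrt_approx.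
have := nm_le_mul b1 a2; have := isqrt_approx_inv n0; have := HN2 n n2.
by have := nmD ((s * (s - S) + (s - S) * S) * (1 - t)) (S * S * (1 - t) - 1); lra.
Qed.

Lemma isqrt_star : star t = t -> star s = s.
Proof.
move=> st; apply/eqP; rewrite -subr_eq0; apply/eqP.
apply: (@eq0_of_nm_le _ _ 2) => // e /s_lim[N /(_ N (leqnn N)) HN].
have -> : star s - s = star (s - isqrt_approx N) + (isqrt_approx N - s).
  by rewrite starB /isqrt_approx peval_star // addrA subrK.
by apply: le_trans (nmD _ _) _; rewrite nm_star nm_distC; lra.
Qed.

Lemma isqrt_comm y : t * y = y * t -> s * y = y * s.
Proof.
move=> ty; apply/eqP; rewrite -subr_eq0; apply/eqP.
apply: (@eq0_of_nm_le _ _ (2 * nm y)); first by rewrite mulr_ge0 ?nm_ge0.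
move=> e /s_lim[N /(_ N (leqnn N)) /ltW HN].
have Sy : isqrt_approx N * y = y * isqrt_approx N by apply: peval_comm.
have -> : s * y - y * s = (s - isqrt_approx N) * y + y * (isqrt_approx N - s).
  by rewrite mulrBl mulrBr Sy addrA subrK.
apply: le_trans (nmD _ _) _.
have := nm_le_mul (lexx (nm y)) HN; rewrite nm_distC in HN.
by have := nm_le_mul HN (lexx (nm y)); lra.
Qed.

End InverseSqrt.

Lemma exists_isqrt (R : realType) (A : cstar_alg R) (t : calg A) (d : R) :
  0 <= d -> 2 * d <= 1 -> ca_norm t <= d ->
  exists s : calg A, [/\ s * s * (1 - t) = 1, star t = t -> star s = s,
    (forall y, t * y = y * t -> s * y = y * s) & ca_norm (s - 1) <= 2 * d].
Proof.
move=> d0 d_le_half nm_t; have [s s_lim] := isqrt_approx_cvg d0 d_le_half nm_t.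
exists s; split.
- by have := isqrt_sqr_inv d0 d_le_half nm_t s_lim.
- exact: isqrt_star s_lim.
- exact: isqrt_comm s_lim.
- by have := isqrt_dist1 d0 d_le_half nm_t s_lim.
Qed.

Section Polar.
Variables (R : realType) (A : cstar_alg R).
Local Notation T := (calg A).
Local Notation nm := (@ca_norm R A).
Implicit Types p q w z : T.

Lemma proj_eq_of_close q P : proj q -> proj P -> q * P = P -> P * q = P ->
  nm (q - P) < 1 -> q = P.
Proof.
move=> [sq qq] [sP PP] qP Pq lt1; apply/eqP; rewrite -subr_eq0; apply/eqP.
apply: proj_small lt1; split; first by rewrite starB sq sP.
by rewrite mulrBl !mulrBr qq qP Pq PP subrr subr0.
Qed.

(* s = (1 - p + z^* z)^(-1/2); it commutes with p because p - z^* z does. *)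
Lemma polar_factor p z (dl : R) : proj p -> z * p = z -> nm z <= 1 ->
  0 <= dl -> 2 * dl <= 1 -> nm (star z * z - p) <= dl ->
  exists s, [/\ star (z * s) * (z * s) = p, z * s * p = z * s,
    nm (z * s - z) <= 2 * dl &
    nm (z * star z - z * s * star (z * s)) <= (1 + 2 * dl) ^+ 2 * dl].
Proof.
move=> [sp pp] zp nz dl0 dl_le_half nm_zzp.
set h := star z * z; set t := p - h.
have pz : p * star z = star z by rewrite -{1}sp -starM zp.
have ph : p * h = h by rewrite /h mulrA pz.
have hp : h * p = h by rewrite /h -mulrA zp.
have pt : p * t = t by rewrite /t mulrBr pp ph.
have tp : t * p = t by rewrite /t mulrBl pp hp.
have nm_t : nm t <= dl by rewrite /t nm_distC.
have [s [s_inv s_star s_comm s_dist1]] := exists_isqrt dl0 dl_le_half nm_t.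
have s_sa : star s = s by apply: s_star; rewrite /t starB /h starM starK sp.
have sp_comm : s * p = p * s by apply: s_comm; rewrite pt tp.
have h_eq : h = p * (1 - t) by rewrite mulrBr mulr1 pt /t opprB addrC subrK.
have s1t : s * (1 - t) = (1 - t) * s by rewrite mulrBr mulrBl mulr1 mul1r (s_comm t).
have nm_s : nm s <= 1 + 2 * dl.
  by have := nmD (s - 1) 1; rewrite subrK; have := nm1_le1 A; lra.
have ss1 : 1 - s * s = - (s * s * t).
  by rewrite -{1}s_inv mulrBr mulr1 addrAC subrr add0r.
exists s; split.
- transitivity (s * h * s); first by rewrite starM s_sa /h !mulrA.
  by rewrite h_eq mulrA sp_comm -mulrA -mulrA -s1t (mulrA s s) s_inv mulr1.
- by rewrite -mulrA sp_comm mulrA zp.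
- rewrite -[X in _ - X]mulr1 -mulrBr; apply: le_trans (nm_contrMl _ nz) _; exact: s_dist1.
have -> : z * star z - z * s * star (z * s) = z * (1 - s * s) * star z.
  by rewrite starM s_sa mulrBr mulr1 mulrBl !mulrA.
apply: le_trans (nm_contrMr _ _) _; first by rewrite nm_star.
apply: le_trans (nm_contrMl _ nz) _; rewrite ss1 nmN expr2.
by apply: nm_le_mul => //; apply: nm_le_mul.
Qed.

(* w w^* is a projection below q within distance 3 dl of q, hence equal to q. *)
Lemma polar p q z (dl : R) : proj p -> proj q -> q * z = z -> z * p = z -> nm z <= 1 ->
  0 <= dl -> 10 * dl <= 1 -> nm (star z * z - p) <= dl -> nm (z * star z - q) <= dl ->
  exists w, [/\ star w * w = p, w * star w = q & nm (w - z) <= 2 * dl].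
Proof.
move=> hp hq qz zp nz dl0 dl_small nm_zzp nm_zzq.
have [|s [ww_p wp w_dist nm_zz_ww]] := polar_factor hp zp nz dl0 _ nm_zzp; first lra.
exists (z * s); split => //; set w := z * s in ww_p wp w_dist nm_zz_ww *.
have qw : q * w = w by rewrite /w mulrA qz.
have sq : star q = q by case: hq.
have wq : star w * q = star w by rewrite -[q in _ * q]sq -starM qw.
apply/esym/proj_eq_of_close => //.
- by split; [rewrite starM starK | rewrite mulrA -(mulrA w) ww_p wp].
- by rewrite mulrA qw.
- by rewrite -mulrA wq.
apply: le_lt_trans (nm_distD _ (z * star z) _) _; rewrite nm_distC.
have : (1 + 2 * dl) ^+ 2 * dl <= 2 * dl.
  by rewrite ler_wpM2r // expr2; nra.
lra.
Qed.

End Polar.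

(* n j is the largest k <= j whose threshold for f k j < b k is already passed at j. *)
Lemma diagonal_null (R : realType) (f : nat -> nat -> R) (b : nat -> R) :
  (forall k, null_seq (f k)) -> (forall k, 0 < b k) ->
  exists n : nat -> nat, forall K, exists J, forall j, (J <= j)%N ->
    (K <= n j)%N /\ f (n j) j < b (n j).
Proof.
move=> f_null b_pos; have [N HN] := choice (fun k => f_null k _ (b_pos k)).
exists (fun j => \max_(k < j.+1 | (N k <= j)%N) (k : nat))%N => K.
exists (maxn K (maxn (N K) (N 0%N))) => j; rewrite !geq_max => /and3P[Kj NKj N0j].
split; first exact: (leq_bigmax_cond (Ordinal (_ : K < j.+1)%N)).
apply: HN; rewrite (bigop.bigmax_eq_arg (ord0 : 'I_j.+1)) //.
by case: arg_maxnP.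
Qed.

Section Commutators.
Variables (R : realType) (A : cstar_alg R).
Local Notation T := (calg A).
Local Notation nm := (@ca_norm R A).
Implicit Types a b p q u v w x y : T.

Lemma unitary1 : unitary (1 : T).
Proof. by split; rewrite star1 mulr1. Qed.

Lemma unitary_star u : unitary u -> unitary (star u).
Proof. by case=> uu uu'; split; rewrite starK. Qed.

Lemma unitaryM u v : unitary u -> unitary v -> unitary (u * v).
Proof.
move=> [uu uu'] [vv vv']; split; rewrite starM.
  by rewrite -mulrA (mulrA (star u)) uu mul1r vv.
by rewrite -mulrA (mulrA v) vv' mul1r uu'.
Qed.

Lemma nm_conj_unitary u a b : unitary u -> nm (u * a * star u - b) <= nm (star u * b * u - a).
Proof.
move=> hu; have [_ uu'] := hu.
have -> : u * a * star u - b = u * (a - star u * b * u) * star u.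
  by rewrite mulrBr mulrBl !mulrA uu' mul1r -(mulrA b u) uu' mulr1.
rewrite nm_distC; apply: le_trans (nm_contrMr _ (nm_star_unitary hu)) _.
exact: nm_contrMl (nm_unitary hu).
Qed.

Lemma nm_comm_star_unitary x a : unitary x -> nm (star x * a - a * star x) <= nm (x * a - a * x).
Proof.
move=> hx; have [xx xx'] := hx.
have -> : star x * a - a * star x = star x * (a * x - x * a) * star x.
  by rewrite mulrBr mulrBl !mulrA xx mul1r -!mulrA xx' mulr1.
rewrite nm_distC; apply: le_trans (nm_contrMr _ (nm_star_unitary hx)) _.
exact: nm_contrMl (nm_star_unitary hx).
Qed.

Lemma nm_commM y1 y2 a : nm (y1 * y2 * a - a * (y1 * y2)) <=
  nm y1 * nm (y2 * a - a * y2) + nm (y1 * a - a * y1) * nm y2.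
Proof.
have -> : y1 * y2 * a - a * (y1 * y2) = y1 * (y2 * a - a * y2) + (y1 * a - a * y1) * y2.
  by rewrite mulrBr mulrBl !mulrA addrA subrK.
by apply: le_trans (nmD _ _) _; apply: lerD; apply: nmM.
Qed.

Lemma nm_comm_dist w y a : nm (w * a - a * w) <= 2 * nm a * nm (w - y) + nm (y * a - a * y).
Proof.
have -> : w * a - a * w = ((w - y) * a - a * (w - y)) + (y * a - a * y).
  by rewrite mulrBl mulrBr opprB addrACA subrK addrAC subrr add0r.
apply: le_trans (nmD _ _) _; rewrite lerD2r; apply: le_trans (nmD _ _) _; rewrite nmN.
have := nmM (w - y) a; have := nmM a (w - y); have := nm_ge0 a; have := nm_ge0 (w - y).
nra.
Qed.

Lemma nm_conj_shift u v p q : unitary u -> unitary v ->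
  nm (star (star v * u) * p * (star v * u) - q) <= nm (p * v - v * p) + nm (star u * p * u - q).
Proof.
move=> hu hv; have [_ vv'] := hv.
have shift : star (star v * u) * p * (star v * u) - star u * p * u
           = star u * ((v * p - p * v) * star v) * u.
  by rewrite starM starK mulrBl !mulrBr !mulrBl !mulrA -(mulrA (star u * p)) vv' mulr1.
have nm_shift : nm (star (star v * u) * p * (star v * u) - star u * p * u)
                 <= nm (p * v - v * p).
  rewrite shift; apply: le_trans (nm_contrMr _ (nm_unitary hu)) _.
  apply: le_trans (nm_contrMl _ (nm_star_unitary hu)) _.
  by rewrite nm_distC; apply: nm_contrMr (nm_star_unitary hv).
by have := nm_distD (star (star v * u) * p * (star v * u)) (star u * p * u) q; lra.
Qed.

Lemma nm_comm_quot u v a b : unitary u -> unitary v ->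
  nm (star v * u * a - a * (star v * u)) <= nm (star u * b * u - a) + nm (star v * b * v - a).
Proof.
move=> hu hv; have [uu _] := hu; have [vv _] := hv.
have -> : star v * u * a - a * (star v * u) = star v * (u * a * star u - v * a * star v) * u.
  by rewrite mulrBr mulrBl !mulrA -(mulrA _ (star u) u) uu mulr1 vv mul1r.
apply: le_trans (nm_contrMr _ (nm_unitary hu)) _.
apply: le_trans (nm_contrMl _ (nm_star_unitary hv)) _.
apply: le_trans (nm_distD _ b _) _; apply: lerD; first exact: nm_conj_unitary.
by rewrite nm_distC; apply: nm_conj_unitary.
Qed.

Section Transfer.
Variables (x p q : T).
Hypotheses (hx : unitary x) (hp : proj p) (hq : proj q).

(* [q x^* p] is almost a partial isometry from p to q when x^* p x is close to q. *)
Local Notation z := (q * star x * p).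
Local Notation dist_pq := (nm (star x * p * x - q)).

Lemma transfer_left : q * z = z.
Proof. by case: hq => _ qq; rewrite !mulrA qq. Qed.

Lemma transfer_right : z * p = z.
Proof. by case: hp => _ pp; rewrite -mulrA pp. Qed.

Lemma nm_transfer : nm z <= 1.
Proof.
apply: le_trans (nm_contrMr _ (nm_proj hp)) _.
by apply: le_trans (nm_contrMr _ (nm_star_unitary hx)) _; apply: nm_proj.
Qed.

Lemma star_transfer : star z = p * x * q.
Proof. by case: hp => sp _; case: hq => sq _; rewrite !starM starK sp sq mulrA. Qed.

Lemma transfer_initial : nm (star z * z - p) <= dist_pq.
Proof.
have [_ xx'] := hx; have [_ pp] := hp; have [_ qq] := hq.
have -> : star z * z - p = (p * x) * (q - star x * p * x) * (star x * p).
  rewrite star_transfer mulrBr mulrBl !mulrA -(mulrA (p * x) q q) qq.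
  by rewrite -(mulrA p x (star x)) xx' mulr1 pp -(mulrA p x (star x)) xx' mulr1 pp.
rewrite nm_distC; apply: le_trans (nm_contrMr _ _) _.
  by apply: le_trans (nm_contrMl _ (nm_star_unitary hx)) _; apply: nm_proj.
by apply: nm_contrMl; apply: le_trans (nm_contrMl _ (nm_proj hp)) _; apply: nm_unitary.
Qed.

Lemma transfer_final : nm (z * star z - q) <= dist_pq.
Proof.
have [_ pp] := hp; have [_ qq] := hq.
have -> : z * star z - q = q * (star x * p * x - q) * q.
  by rewrite star_transfer mulrBr mulrBl !mulrA -(mulrA (q * star x) p p) pp qq qq.
by apply: le_trans (nm_contrMr _ (nm_proj hq)) _; apply: nm_contrMl (nm_proj hq).
Qed.

Lemma transfer_dist : nm (z - star x * p) <= dist_pq.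
Proof.
have [_ xx'] := hx; have [_ pp] := hp.
have -> : z - star x * p = (q - star x * p * x) * (star x * p).
  by rewrite mulrBl !mulrA -(mulrA (star x * p) x (star x)) xx' mulr1 -(mulrA (star x) p p) pp.
rewrite nm_distC; apply: nm_contrMr.
by apply: le_trans (nm_contrMl _ (nm_star_unitary hx)) _; apply: nm_proj.
Qed.

Lemma nm_comm_near_transfer w a (dl : R) : dist_pq <= dl -> nm (w - z) <= 2 * dl ->
  nm (w * a - a * w) <= 6 * nm a * dl + (nm (p * a - a * p) + nm (x * a - a * x)).
Proof.
move=> hdl wz; set y := star x * p.
apply: le_trans (nm_comm_dist w y a) _.
have wy : nm (w - y) <= 3 * dl.
  by apply: le_trans (nm_distD _ z _) _; have := le_trans transfer_dist hdl; lra.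
have ya : nm (y * a - a * y) <= nm (p * a - a * p) + nm (x * a - a * x).
  apply: le_trans (nm_commM _ _ _) _.
  have := nm_comm_star_unitary a hx; have := nm_star_unitary hx; have := nm_proj hp.
  have := nm_ge0 (p * a - a * p); have := nm_ge0 (star x * a - a * star x).
  by have := nm_ge0 (star x); have := nm_ge0 p; nra.
by have := nm_ge0 a; have := nm_ge0 (w - y); nra.
Qed.

End Transfer.

End Commutators.

Section CentralUnitaries.
Variables (R : realType) (A : cstar_alg R).
Local Notation T := (calg A).
Local Notation nm := (@ca_norm R A).

Variables (alpha alpha_inv : T -> T) (u p : nat -> T).
Hypotheses (alphaK : cancel alpha_inv alpha) (u_unitary : forall k, unitary (u k)).
Hypothesis u_approx : forall a, null_seq (fun k => nm (star (u k) * a * u k - alpha a)).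
Hypothesis p_central : forall a, null_seq (fun j => nm (p j * a - a * p j)).

Variables n m : nat -> nat.
Hypothesis n_diag : forall K, exists J, forall j, (J <= j)%N ->
  (K <= n j)%N /\ nm (p j * u (n j) - u (n j) * p j) < tol (n j).
Hypotheses (m_ge : forall j, (j <= m j)%N)
  (m_approx : forall j, nm (star (u (m j)) * p j * u (m j) - alpha (p j)) < tol j).

Definition diag_unitary j : T :=
  if nm (p j * u (n j) - u (n j) * p j) < tol (n j) then u (n j) else 1.
Definition central_unitary j : T := star (diag_unitary j) * u (m j).
Definition central_defect j : R := nm (p j * diag_unitary j - diag_unitary j * p j) + tol j.

Lemma diag_unitaryE : exists J, forall j, (J <= j)%N -> diag_unitary j = u (n j).
Proof. by have [J HJ] := n_diag 0; exists J => j /HJ[_ small]; rewrite /diag_unitary small. Qed.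

Lemma nm_comm_diag_unitary j : nm (p j * diag_unitary j - diag_unitary j * p j) <= 1 / 20.
Proof.
rewrite /diag_unitary; case: ifP => [/ltW small|_]; first exact: le_trans small (tol_le _ _).
by rewrite mulr1 mul1r subrr nm0 divr_ge0.
Qed.

Lemma diag_unitaryP j : unitary (diag_unitary j).
Proof. by rewrite /diag_unitary; case: ifP => _; [apply: u_unitary | apply: unitary1]. Qed.

Lemma central_unitaryP j : unitary (central_unitary j).
Proof. by apply: unitaryM; [apply/unitary_star/diag_unitaryP | apply: u_unitary]. Qed.

Lemma central_unitary_conj j :
  nm (star (central_unitary j) * p j * central_unitary j - alpha (p j)) <= central_defect j.
Proof.
apply: le_trans (nm_conj_shift _ _ (u_unitary (m j)) (diag_unitaryP j)) _.
by rewrite lerD2l ltW.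
Qed.

Lemma central_defect_bound j : 0 <= central_defect j /\ 10 * central_defect j <= 1.
Proof.
have := nm_comm_diag_unitary j; have := tol_le R j; have := tol_gt0 R j.
have := nm_ge0 (p j * diag_unitary j - diag_unitary j * p j).
by rewrite /central_defect; split; lra.
Qed.

Lemma n_unbounded K : exists J, forall j, (J <= j)%N -> (K <= n j)%N.
Proof. by have [J HJ] := n_diag K; exists J => j /HJ[]. Qed.

Lemma central_defect_null : null_seq central_defect.
Proof.
apply: (@null_seqD _ (fun j => nm (p j * diag_unitary j - diag_unitary j * p j)));
  last exact: null_seq_tol.
apply: null_seq_le (null_seq_comp (@null_seq_tol R) n_unbounded).
have [J HJ] := n_diag 0; exists J => j /HJ[_ small] /=.
by rewrite /diag_unitary small ltW.
Qed.

Lemma central_unitary_central a :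
  null_seq (fun j => nm (central_unitary j * a - a * central_unitary j)).
Proof.
set b := alpha_inv a.
apply: null_seq_le (null_seqD
  (f := fun j => nm (star (u (m j)) * b * u (m j) - alpha b))
  (g := fun j => nm (star (diag_unitary j) * b * diag_unitary j - alpha b)) _ _).
- exists 0%N => j _; rewrite /b alphaK.
  exact: nm_comm_quot (u_unitary (m j)) (diag_unitaryP j).
- by apply: null_seq_comp (u_approx b) _ => K; exists K => j /leq_trans; apply.
- apply: null_seq_le (null_seq_comp (u_approx b) n_unbounded).
  by have [J HJ] := diag_unitaryE; exists J => j /HJ ->.
Qed.

End CentralUnitaries.

Section CentralPartialIsometries.
Variables (R : realType) (A : cstar_alg R).
Local Notation T := (calg A).
Local Notation nm := (@ca_norm R A).

Lemma exists_central_unitaries (alpha alpha_inv : T -> T) (u p : nat -> T) :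
  cancel alpha_inv alpha -> (forall k, unitary (u k)) ->
  (forall a, null_seq (fun k => nm (star (u k) * a * u k - alpha a))) ->
  (forall a, null_seq (fun j => nm (p j * a - a * p j))) ->
  exists (x : nat -> T) (dlt : nat -> R), [/\ forall j, unitary (x j),
    forall j, nm (star (x j) * p j * x j - alpha (p j)) <= dlt j,
    forall j, 0 <= dlt j /\ 10 * dlt j <= 1, null_seq dlt &
    forall a, null_seq (fun j => nm (x j * a - a * x j))].
Proof.
move=> alphaK u_unitary u_approx p_central.
have [n n_diag] := diagonal_null (fun k => p_central (u k)) (@tol_gt0 R).
have m_ex j : exists m, (j <= m)%N /\ nm (star (u m) * p j * u m - alpha (p j)) < tol j.
  have [N HN] := u_approx (p j) _ (tol_gt0 R j).
  by exists (maxn N j); rewrite leq_maxr HN ?leq_maxl.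
have [m /all_and2[m_ge m_approx]] := choice m_ex.
exists (central_unitary u p n m), (central_defect u p n); split.
- exact: central_unitaryP.
- exact: central_unitary_conj.
- exact: central_defect_bound.
- exact: central_defect_null.
- exact: central_unitary_central.
Qed.

Lemma exists_central_partial_isometries (p q x : nat -> T) (dlt : nat -> R) :
  (forall j, proj (p j)) -> (forall j, proj (q j)) -> (forall j, unitary (x j)) ->
  (forall j, nm (star (x j) * p j * x j - q j) <= dlt j) ->
  (forall j, 0 <= dlt j /\ 10 * dlt j <= 1) -> null_seq dlt ->
  (forall a, null_seq (fun j => nm (p j * a - a * p j))) ->
  (forall a, null_seq (fun j => nm (x j * a - a * x j))) ->
  exists w : nat -> T, (forall j, star (w j) * w j = p j /\ w j * star (w j) = q j) /\
    forall a, null_seq (fun j => nm (w j * a - a * w j)).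
Proof.
move=> p_proj q_proj x_unitary x_conj dlt_bound dlt_null p_central x_central.
have w_ex j : exists w, [/\ star w * w = p j, w * star w = q j &
                           nm (w - q j * star (x j) * p j) <= 2 * dlt j].
  have [dlt0 dlt_small] := dlt_bound j.
  have xj := x_unitary j; have pj := p_proj j; have qj := q_proj j.
  apply: (polar pj qj (transfer_left _ _ qj) (transfer_right _ _ pj) (nm_transfer xj pj qj)
                dlt0 dlt_small).
    exact: le_trans (transfer_initial xj pj qj) (x_conj j).
  exact: le_trans (transfer_final _ pj qj) (x_conj j).
have [w Hw] := choice w_ex.
exists w; split=> [j|a]; first by case: (Hw j).
apply: null_seq_le (null_seqD (null_seqZ (K := 6 * nm a) _ dlt_null)
                              (null_seqD (p_central a) (x_central a))).
  exists 0%N => j _; have [_ _ w_near] := Hw j.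
  by have := nm_comm_near_transfer (x_unitary j) (p_proj j) a (x_conj j) w_near.
by rewrite mulr_ge0 ?nm_ge0.
Qed.

End CentralPartialIsometries.

Theorem lemma3p1 (R : realType) (A : cstar_alg R) (alpha : A -> A)
  (p : nat -> A) :
  separable A ->
  is_automorphism alpha ->
  approximately_inner alpha ->
  (forall j, is_projection (p j)) ->
  central_seq p ->
  exists w : nat -> A,
    (forall j, is_partial_isometry (w j)) /\ central_seq w /\
    (forall j, ca_mul (ca_star (w j)) (w j) = p j /\
               ca_mul (w j) (ca_star (w j)) = alpha (p j)).
Proof.
move=> _ [_ [_ [alphaM [_ [alpha_star [alpha_inv _ alphaK]]]]]] [u [u_unitary u_approx]].
move=> p_proj p_central.
have q_proj j : proj (alpha (p j)).
  have [sp pp] := p_proj j; split; first by rewrite /star -alpha_star sp.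
  by rewrite -[_ * _]/(ca_mul _ _) -alphaM pp.
have [x [dlt [x_unitary x_conj dlt_bound dlt_null x_central]]] :=
  exists_central_unitaries alphaK u_unitary u_approx p_central.
have [w [w_pi w_central]] := exists_central_partial_isometries p_proj q_proj x_unitary
  x_conj dlt_bound dlt_null p_central x_central.
exists w; split; [|split] => // j.
have [ww_p _] := w_pi j; change (proj (star (w j) * w j)); rewrite ww_p; exact: p_proj.
Qed.
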